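(* For every $a\in[\mathbb{F}_q^{\times}]$ (Teichmüller lifts) one has $f_a^{\mathrm{LT}}=1$. More generally, for every $a\in\mathcal{O}_K^{\times}$, \[ \big(f_a^{\mathrm{LT}}\big)^{-1}\in 1+c_aT_K^{q-1}-c_a^{p^{f-1}}T_K^{(q-1)(p^{f-1}+1)}+T_K^{(q-1)(2p^{f-1}+1)}\mathbb{F}_q[[T_K^{q-1}]], \] where $c_a\in\mathbb{F}_q$ is the reduction modulo $p$ of $(1-a^{q-1})/p\in\mathcal{O}_K$.
   Context: Let $p$ be an odd prime, $K$ the unramified extension of $\mathbb{Q}_p$ of degree $f\ge1$, with ring of integers $\mathcal{O}_K$ and residue field $\mathbb{F}_q$, $q=p^f$. Let $G_{\mathrm{LT}}$ be the Lubin–Tate formal $\mathcal{O}_K$-module over $\mathcal{O}_K$ attached to the uniformizer $p$, with formal variable $T_K$ chosen so that its logarithm is $\sum_{n\ge0}p^{-n}T_K^{q^n}$. For $a\in\mathcal{O}_K$ let $a_{\mathrm{LT}}(T_K)\in aT_K+T_K^2\mathcal{O}_K[[T_K]]$ be the endomorphism series of $G_{\mathrm{LT}}$ attached to $a$, and also denote by $a_{\mathrm{LT}}(T_K)\in\mathbb{F}_q[[T_K]]$ its reduction mod $p$. For $a\in\mathcal{O}_K^\times$ with reduction $\bar a\in\mathbb{F}_q^\times$, set $f_a^{\mathrm{LT}}:=\bar aT_K/a_{\mathrm{LT}}(T_K)\in 1+T_K\mathbb{F}_q[[T_K]]$. *)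

From HB Require Import structures.
From mathcomp Require Import all_boot all_order all_algebra.
Set Implicit Arguments.
Unset Strict Implicit.
Unset Printing Implicit Defensive.
Import Order.TTheory GRing.Theory Num.Theory.
Local Open Scope ring_scope.

(* The ring O_K.  We do not have p-adic numbers in the library, so O_K is  *)
(* taken as an abstract integral domain R satisfying the properties that   *)
(* characterize the ring of integers of the unramified extension of Q_p of *)
(* degree f (up to isomorphism, by Cohen's structure theorem this is       *)
(* W(F_q)): p <> 0, every non-unit is divisible by p (local ring with      *)
(* maximal ideal pR), R is p-adically separated and complete, and the      *)
(* residue field R/pR has exactly q = p^f elements.                        *)

Definition congp (R : nzRingType) (p : nat) (x y : R) : Prop :=
  exists z : R, x - y = p%:R * z.

Definition is_unramified_Zp_ext (R : idomainType) (p f : nat) : Prop :=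
  [/\ p%:R != 0 :> R,
      (forall x : R, x \is a GRing.unit \/ exists y : R, x = p%:R * y),
      (forall x : R, (forall n : nat, exists y : R, x = p%:R ^+ n * y) -> x = 0),
      (forall u : nat -> R,
          (forall n : nat, exists y : R, u n.+1 - u n = p%:R ^+ n * y) ->
          exists l : R, forall n : nat, exists y : R, l - u n = p%:R ^+ n * y) &
      (exists r : 'I_(p ^ f) -> R,
          (forall i j, congp p (r i) (r j) -> i = j) /\
          (forall x : R, exists i, congp p x (r i)))].

Definition ps_one (R : nzRingType) : nat -> R := fun k => (k == 0%N)%:R.

Definition ps_mul (R : nzRingType) (s t : nat -> R) : nat -> R :=
  fun k => \sum_(i < k.+1) s i * t (k - i)%N.

Definition ps_pow (R : nzRingType) (s : nat -> R) (n : nat) : nat -> R :=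
  iter n (ps_mul s) (ps_one R).

Fixpoint ps_inv_seq (R : unitRingType) (s : nat -> R) (n : nat) : seq R :=
  match n with
  | 0%N => [:: (s 0%N)^-1]
  | n'.+1 =>
      let b := ps_inv_seq s n' in
      rcons b (- (s 0%N)^-1 * \sum_(j < n'.+1) s j.+1 * nth 0 b (n' - j)%N)
  end.

Definition ps_inv (R : unitRingType) (s : nat -> R) : nat -> R :=
  fun n => nth 0 (ps_inv_seq s n) n.

(* Lubin-Tate formal O_K-module with logarithm  sum_n p^-n T^(q^n).        *)

Definition LTlog_coef (F : unitRingType) (p f k : nat) : F :=
  \sum_(n < k.+1) (if k == ((p ^ f) ^ n)%N then (p%:R : F) ^- n else 0).

(* phi is the endomorphism series a_LT(T) in O_K[[T]] of G_LT attached to a: *)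
(* phi in aT + T^2 O_K[[T]] and log(phi(T)) = a log(T) in K[[T]].  Since      *)
(* phi(0) = 0, the coefficient of T^k in log(phi(T)) = sum_n p^-n phi^(q^n)  *)
(* only involves n <= k.                                                     *)
Definition is_LT_endo (R : idomainType) (p f : nat) (a : R) (phi : nat -> R)
  : Prop :=
  [/\ phi 0%N = 0, phi 1%N = a &
      forall k : nat,
        \sum_(n < k.+1)
           ((p%:R : {fraction R}) ^- n) *
           FracField.tofrac (ps_pow phi ((p ^ f) ^ n)%N k)
        = FracField.tofrac a * LTlog_coef {fraction R} p f k].

(* Coefficients of  a_LT(T) / (a T)  in O_K[[T]]; its reduction mod p is   *)
(* (f_a^LT)^-1 = a_LT(T) / (abar T).                                         *)
Definition fLT_inv (R : unitRingType) (a : R) (phi : nat -> R) : nat -> R :=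
  fun k => a^-1 * phi k.+1.

(* Coefficients of  a T / a_LT(T)  in O_K[[T]]; its reduction mod p is     *)
(* f_a^LT = abar T / a_LT(T).                                                *)
Definition fLT (R : unitRingType) (a : R) (phi : nat -> R) : nat -> R :=
  ps_inv (fLT_inv a phi).

Definition LT_expected (R : nzRingType) (p f : nat) (c : R) (k : nat) : R :=
  if k == 0%N then 1
  else if k == (p ^ f).-1 then c
  else if k == ((p ^ f).-1 * (p ^ f.-1 + 1))%N then - c ^+ (p ^ f.-1)
  else 0.

Definition LT_shape (R : nzRingType) (p f : nat) (c : R) (g : nat -> R) : Prop :=
  forall k : nat,
    ((k < (p ^ f).-1 * (2 * p ^ f.-1 + 1))%N -> congp p (g k) (LT_expected p f c k))
    /\ (((p ^ f).-1 * (2 * p ^ f.-1 + 1) <= k)%N -> ~~ ((p ^ f).-1 %| k)%N ->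
        congp p (g k) 0).

(* Write h := a_LT(T) / (aT) = 1 + G.  Comparing coefficients in
   log(a_LT(T)) = a log(T) gives, by induction on the degree, that a_LT = aT
   when a^(q-1) = 1, and in general that h only involves powers of T^(q-1);
   below degree q^2 the identity reduces to p a_LT(T) + a_LT(T)^q = a (pT + T^q),
   i.e. p h_(Q(m+1)) = [m = 0] - a^Q [h^q]_(Qm) with Q = q - 1.  Modulo p^2
   the only binomial coefficient of (1 + G)^q that matters is
   C(q, p^(f-1)) = p mod p^2, and modulo p, G^(p^(f-1)) = (h_Q T^Q)^(p^(f-1))
   in the relevant range; dividing by p and using a^Q = 1 - pc gives
   h_(Q(m+1)) = c [m = 0] - c^(p^(f-1)) [m = p^(f-1)] mod p for m < 2 p^(f-1). *)

From HB Require Import structures.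
From mathcomp Require Import all_boot all_order all_algebra.
From mathcomp Require Import zify ring.
Set Implicit Arguments.
Unset Strict Implicit.
Unset Printing Implicit Defensive.

Import GRing.Theory.
Local Open Scope ring_scope.

(* Congruence modulo the principal ideal dR; [congp p] is [eqmod p%:R]. *)
Definition eqmod {R : nzRingType} (d x y : R) : Prop := exists z, x - y = d * z.

Section Eqmod.
Variables (R : comNzRingType) (d : R).

Lemma eqmod_refl x : eqmod d x x.
Proof. by exists 0; rewrite subrr mulr0. Qed.

Lemma eqmod_trans x y z : eqmod d x y -> eqmod d y z -> eqmod d x z.
Proof. by case=> u e1 [v e2]; exists (u + v); rewrite mulrDr -e1 -e2 addrA subrK. Qed.

Lemma eqmodD x1 y1 x2 y2 :
  eqmod d x1 y1 -> eqmod d x2 y2 -> eqmod d (x1 + x2) (y1 + y2).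
Proof. by case=> u e1 [v e2]; exists (u + v); rewrite mulrDr -e1 -e2 opprD addrACA. Qed.

Lemma eqmodN x y : eqmod d x y -> eqmod d (- x) (- y).
Proof. by case=> u e; exists (- u); rewrite mulrN -e opprD. Qed.

Lemma eqmodM x1 y1 x2 y2 :
  eqmod d x1 y1 -> eqmod d x2 y2 -> eqmod d (x1 * x2) (y1 * y2).
Proof.
case=> u e1 [v e2]; exists (u * x2 + y1 * v).
by rewrite mulrDr mulrA -e1 mulrCA -e2; ring.
Qed.

Lemma eqmodX x y n : eqmod d x y -> eqmod d (x ^+ n) (y ^+ n).
Proof.
move=> exy; elim: n => [|n IH]; first exact: eqmod_refl.
by rewrite !exprS; apply: eqmodM.
Qed.

Lemma eqmod_sum0 I r (P : pred I) (F : I -> R) :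
  (forall i, P i -> eqmod d (F i) 0) -> eqmod d (\sum_(i <- r | P i) F i) 0.
Proof.
move=> eF0; elim/big_rec: _ => [|i x Pi ex]; first exact: eqmod_refl.
by rewrite -[0]addr0; apply: eqmodD (eF0 i Pi) ex.
Qed.

Lemma eqmod_mulrn_dvd (n m : nat) (x : R) : (n %| m)%N -> eqmod n%:R (x *+ m) 0.
Proof. by case/dvdnP=> k ->; exists (x *+ k); rewrite subr0 mulrnA mulr_natl. Qed.

End Eqmod.

Lemma eqmod_mul2l (R : idomainType) (d e x y : R) :
  d != 0 -> eqmod (d * e) (d * x) (d * y) -> eqmod e x y.
Proof. by move=> d0 [z exy]; exists z; apply: (mulfI d0); rewrite mulrBr mulrA. Qed.

Lemma eqmod_coef (R : comNzRingType) (n : nat) (P P' : {poly R}) j :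
  eqmod n%:R P P' -> eqmod n%:R P`_j P'`_j.
Proof. by case=> Z e; exists Z`_j; rewrite -coefB e mulr_natl coefMn mulr_natl. Qed.

Section BinomialPfactor.
Variables (p : nat) (p_pr : prime p).

Lemma dvdn_bin_pfactor e i :
  (0 < i <= p ^ e)%N -> (p ^ (e - logn p i) %| 'C(p ^ e, i))%N.
Proof.
case/andP=> i_gt0 i_le.
have bin_gt0 : (0 < 'C(p ^ e, i))%N by rewrite bin_gt0.
have : (p ^ e %| i * 'C(p ^ e, i))%N.
  by rewrite -(prednK i_gt0) -mul_bin_diag dvdn_mulr.
by rewrite !pfactor_dvdn ?muln_gt0 ?i_gt0 // lognM // leq_subLR.
Qed.

Lemma prime_dvd_bin_pfactor e i : (0 < i < p ^ e)%N -> (p %| 'C(p ^ e, i))%N.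
Proof.
case/andP=> i_gt0 i_lt.
apply: dvdn_trans _ (@dvdn_bin_pfactor e i _); last by rewrite i_gt0 ltnW.
have : ~~ (p ^ e %| i)%N by apply/negP => /(dvdn_leq i_gt0); rewrite leqNgt i_lt.
rewrite (pfactor_dvdn _ p_pr i_gt0) -ltnNge => ?.
by rewrite -{1}(expn1 p) dvdn_exp2l // subn_gt0.
Qed.

Lemma pfactor2_dvd_bin e i :
  (0 < i < 2 * p ^ e.-1)%N -> i != (p ^ e.-1)%N -> (p ^ 2 %| 'C(p ^ e, i))%N.
Proof.
case/andP=> i_gt0 i_lt i_neq.
have i_le : (i <= p ^ e)%N.
  have : (2 * p ^ e.-1 <= (p ^ e).+1)%N.
    by case: e {i_lt i_neq} => [|e] //=; rewrite expnS; have := prime_gt1 p_pr; nia.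
  by lia.
apply: dvdn_trans _ (@dvdn_bin_pfactor e i _); last by rewrite i_gt0.
have : ~~ (p ^ e.-1 %| i)%N.
  apply: contra i_neq => /dvdnP [k i_eq]; move: i_gt0 i_lt; rewrite i_eq.
  by case: k {i_eq} => [|[|k]]; rewrite ?mul1n //; nia.
by rewrite (pfactor_dvdn _ p_pr i_gt0) => ?; apply: dvdn_exp2l; lia.
Qed.

Lemma eqmod_exprD_pfactor (R : comNzRingType) (x y : R) e :
  eqmod p%:R ((x + y) ^+ (p ^ e)) (x ^+ (p ^ e) + y ^+ (p ^ e)).
Proof.
have q_gt0 : (0 < p ^ e)%N by rewrite expn_gt0 prime_gt0.
rewrite exprDn -(prednK q_gt0) big_ord_recr big_ord_recl /= prednK //.
rewrite subn0 subnn bin0 binn expr0 mulr1 mul1r !mulr1n -[X in eqmod _ _ X]addr0 addrAC.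
apply: eqmodD; first exact: eqmod_refl.
apply: eqmod_sum0 => i _; apply: eqmod_mulrn_dvd; apply: prime_dvd_bin_pfactor.
by rewrite /bump /=; have := ltn_ord i; lia.
Qed.

Lemma eqmod_bin_pred_pfactor (R : comNzRingType) e j :
  (j < p ^ e)%N -> eqmod p%:R ('C((p ^ e).-1, j)%:R : R) ((-1) ^+ j).
Proof.
have q_gt0 : (0 < p ^ e)%N by rewrite expn_gt0 prime_gt0.
elim: j => [|j IH] j_lt; first by rewrite bin0 expr0; apply: eqmod_refl.
have := binS (p ^ e).-1 j; rewrite prednK // => /(congr1 (GRing.natmul (1 : R))).
rewrite natrD => /eqP; rewrite -subr_eq => /eqP <-.
rewrite exprS mulN1r -[X in eqmod _ _ X]add0r.
apply: eqmodD; last by apply: eqmodN; apply: IH; lia.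
by rewrite -[_%:R]mulr1n; apply: eqmod_mulrn_dvd; apply: prime_dvd_bin_pfactor.
Qed.

Lemma eqmod_bin_pfactor_pred (R : comNzRingType) e :
  odd p -> (0 < e)%N -> eqmod (p%:R ^+ 2) ('C(p ^ e, p ^ e.-1)%:R : R) p%:R.
Proof.
move=> p_odd e_gt0; have N_gt0 : (0 < p ^ e.-1)%N by rewrite expn_gt0 prime_gt0.
have binE : 'C(p ^ e, p ^ e.-1) = (p * 'C((p ^ e).-1, (p ^ e.-1).-1))%N.
  have := mul_bin_diag (p ^ e) (p ^ e.-1).-1; rewrite prednK // -{1}(prednK e_gt0) expnS.
  by rewrite mulnAC mulnC => /eqP; rewrite eqn_pmul2l // => /eqP.
have [|z ez] := @eqmod_bin_pred_pfactor R e (p ^ e.-1).-1.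
  by apply: leq_ltn_trans (leq_pred _) _; rewrite ltn_exp2l ?prime_gt1 //; lia.
have Npred_even : ~~ odd (p ^ e.-1).-1.
  by have := oddX p e.-1; rewrite p_odd orbT -(prednK N_gt0) /=.
rewrite -signr_odd (negbTE Npred_even) expr0 in ez.
by exists z; rewrite binE natrM -[X in _ - X]mulr1 -mulrBr ez mulrA expr2.
Qed.

End BinomialPfactor.

Section PowerSeries.
Variable R : nzRingType.
Implicit Types (s t : nat -> R).

Lemma ps_powS s m k : ps_pow s m.+1 k = \sum_(i < k.+1) s i * ps_pow s m (k - i).
Proof. by []. Qed.

Lemma ps_pow1 s k : ps_pow s 1 k = s k.
Proof.
rewrite ps_powS big_ord_recr /= subnn /ps_pow /ps_one /= mulr1 big1 ?add0r // => i _.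
by rewrite subn_eq0 leqNgt ltn_ord mulr0.
Qed.

Lemma ps_pow_small s m k : s 0%N = 0 -> (k < m)%N -> ps_pow s m k = 0.
Proof.
move=> s0; elim: m k => // m IH k k_lt; rewrite ps_powS big1 // => [[[|i] /= i_le]] _.
  by rewrite s0 mul0r.
by rewrite IH ?mulr0 //; lia.
Qed.

Lemma eq_ps_pow_lt s t K m j :
  (forall i, (i < K)%N -> s i = t i) -> (j < K)%N -> ps_pow s m j = ps_pow t m j.
Proof.
move=> eq_st; elim: m j => // m IH j j_lt; rewrite !ps_powS; apply: eq_bigr => i _.
by rewrite eq_st ?IH //; have := ltn_ord i; lia.
Qed.

Lemma eq_ps_pow s t K m : s 0%N = 0 -> t 0%N = 0 ->
  (forall i, (i < K)%N -> s i = t i) -> (1 < m)%N -> ps_pow s m K = ps_pow t m K.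
Proof.
move=> s0 t0 eq_st; case: m => [|m] // m_gt0.
rewrite !ps_powS; apply: eq_bigr => -[[|i] i_le] _ /=; first by rewrite s0 t0 !mul0r.
have [i_lt|K_le] := ltnP i.+1 K; first by rewrite eq_st // (eq_ps_pow_lt _ eq_st) //; lia.
have -> : (K - i.+1 = 0)%N by lia.
by rewrite !ps_pow_small ?mulr0.
Qed.

Lemma ps_pow_support (Q : nat) s m K :
  (forall j, (j %% Q != 1)%N -> s j = 0) -> (K %% Q != m %% Q)%N -> ps_pow s m K = 0.
Proof.
move=> s_supp; elim: m K => [|m IH] K K_mod.
  by case: K K_mod => [|K]; rewrite ?mod0n ?eqxx.
rewrite ps_powS big1 // => -[i i_le] _ /=.
have [i_mod|] := eqVneq (i %% Q)%N 1; last by move/s_supp ->; rewrite mul0r.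
rewrite IH ?mulr0 //; apply: contra K_mod => /eqP Ki_mod.
by rewrite -(subnK (i_le : (i <= K)%N)) -modnDml Ki_mod modnDml -modnDmr i_mod addn1.
Qed.

Lemma coef_exp_ps_pow s (P : {poly R}) K m :
  (forall j, (j <= K)%N -> P`_j = s j) -> (P ^+ m)`_K = ps_pow s m K.
Proof.
elim: m K => [|m IH] K eq_Ps; first by rewrite expr0 coef1.
rewrite exprS coefM ps_powS; apply: eq_bigr => -[i i_le] _ /=.
by rewrite eq_Ps // (IH (K - i)%N) // => j j_le; apply: eq_Ps; lia.
Qed.

End PowerSeries.

Lemma ps_pow_monomial (R : comNzRingType) (a : R) m k :
  ps_pow (fun j => a * (j == 1)%:R) m k = a ^+ m * (k == m)%:R.
Proof.
rewrite -(coef_exp_ps_pow _ (P := a *: 'X)) => [|j _]; last by rewrite coefZ coefX.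
by rewrite exprZn coefZ coefXn.
Qed.

Lemma ps_inv_one (R : unitRingType) (s : nat -> R) : s =1 ps_one R -> ps_inv s =1 ps_one R.
Proof.
move=> s1 n; have seqE m : ps_inv_seq s m = mkseq (ps_one R) m.+1.
  elim: m => [|m IH] /=; first by rewrite s1 invr1.
  by rewrite IH [in RHS]mkseqS big1 ?mulr0 // => j _; rewrite s1 mul0r.
by rewrite /ps_inv seqE nth_mkseq.
Qed.

Lemma expn_mod_pred q n : (2 < q)%N -> (q ^ n %% q.-1 = 1)%N.
Proof.
move=> q_gt2; have Q_gt1 : (1 < q.-1)%N by case: q q_gt2 => [|[|[|q]]].
have q_mod : (q %% q.-1 = 1)%N.
  by rewrite -{1}(prednK (ltnW (ltnW q_gt2))) -addn1 modnDl modn_small.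
by rewrite -modnXm q_mod exp1n modn_small.
Qed.

Section LubinTateEndomorphism.
Variables (p f : nat) (R : idomainType) (a : R) (phi : nat -> R).
Hypothesis phiE : is_LT_endo p f a phi.
Local Notation q := (p ^ f)%N.
Local Notation "x %:F" := (FracField.tofrac x).

(* Coefficient of T^k in phi^(q^n) - a T^(q^n); the identity log(phi) = a log(T)
   says that these add up to 0 with weights p^-n. *)
Definition LT_defect k n := ps_pow phi (q ^ n)%N k - a * (k == q ^ n)%N%:R.

Lemma LT_defect_sum k :
  \sum_(n < k.+1) (p%:R : {fraction R}) ^- n * (LT_defect k n)%:F = 0.
Proof.
case: phiE => _ _ /(_ k); rewrite /LTlog_coef mulr_sumr => /eqP; rewrite -subr_eq0 -sumrB.
move=> /eqP E; rewrite -[RHS]E; apply: eq_bigr => n _; rewrite rmorphB rmorphM rmorph_nat.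
by case: (k == _); rewrite ?mulr1 ?mulr0 //; ring.
Qed.

Lemma LT_defect0 k : LT_defect k 0 = phi k - a * (k == 1)%:R.
Proof. by rewrite /LT_defect expn0 ps_pow1. Qed.

Lemma LT_endo_coef_defect k :
  (forall n, (0 < n <= k)%N -> LT_defect k n = 0) -> phi k = a * (k == 1)%:R.
Proof.
move=> defect0; have := LT_defect_sum k; rewrite big_ord_recl big1 => [|n _]; last first.
  by rewrite defect0 ?rmorph0 ?mulr0 //= /bump /=; have := ltn_ord n; lia.
by rewrite addr0 expr0 invr1 mul1r LT_defect0 => /eqP; rewrite tofrac_eq0 subr_eq0 => /eqP.
Qed.

Lemma LT_defect01 k : p%:R != 0 :> R -> (0 < k)%N ->
  (forall n, (1 < n <= k)%N -> LT_defect k n = 0) ->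
  p%:R * LT_defect k 0 + LT_defect k 1 = 0.
Proof.
move=> p_neq0 k_gt0 defect0; have := LT_defect_sum k; case: k k_gt0 defect0 => // k _ defect0.
rewrite 2!big_ord_recl big1 => [|n _]; last first.
  by rewrite defect0 ?rmorph0 ?mulr0 //= /bump /=; have := ltn_ord n; lia.
have pF_neq0 : (p%:R : {fraction R}) != 0 by rewrite -tofrac1 -tofracMn tofrac_eq0.
rewrite addr0 expr0 invr1 mul1r expr1 => E.
apply/eqP; rewrite -tofrac_eq0 tofracD tofracM tofracMn tofrac1.
by rewrite -[(LT_defect _ 1)%:F](mulVKf pF_neq0) -mulrDr E mulr0.
Qed.

Lemma LT_endo_teichmuller :
  (1 < q)%N -> a ^+ q.-1 = 1 -> forall k, phi k = a * (k == 1)%:R.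
Proof.
move=> q_gt1 aq1; case: phiE => phi0 _ _.
have a_expq n : a ^+ (q ^ n) = a.
  have a_q : a ^+ q = a by rewrite -(prednK (ltnW q_gt1)) exprS aq1 mulr1.
  by elim: n => [|n IH]; rewrite ?expr1 // expnSr exprM IH.
elim/ltn_ind=> k IH; apply: LT_endo_coef_defect => n /andP [n_gt0 _].
have qn_gt1 : (1 < q ^ n)%N by rewrite -{1}(expn0 q) ltn_exp2l.
by rewrite /LT_defect (eq_ps_pow phi0 (mulr0 a) IH qn_gt1) ps_pow_monomial a_expq subrr.
Qed.

Lemma LT_endo_support : (2 < q)%N -> forall k, (k %% q.-1 != 1)%N -> phi k = 0.
Proof.
move=> q_gt2; case: phiE => phi0 _ _; elim/ltn_ind=> k IH k_mod.
have k_neq1 : k != 1%N by apply: contraNneq k_mod => ->; rewrite modn_small //; lia.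
rewrite LT_endo_coef_defect ?(negbTE k_neq1) ?mulr0 // => n /andP [n_gt0 _].
have qn_neq : (k == q ^ n)%N = false.
  by apply: contraNF k_mod => /eqP ->; rewrite expn_mod_pred.
pose t j := if (j < k)%N then phi j else 0.
have t0 : t 0%N = 0 by rewrite /t; case: ifP.
have phi_t j : (j < k)%N -> phi j = t j by rewrite /t => ->.
have qn_gt1 : (1 < q ^ n)%N by rewrite -{1}(expn0 q) ltn_exp2l //; lia.
rewrite /LT_defect qn_neq mulr0 subr0 (eq_ps_pow phi0 t0 phi_t qn_gt1).
apply: (ps_pow_support (Q := q.-1)) => [j|]; last by rewrite expn_mod_pred.
by rewrite /t; case: ifP => // j_lt /IH ->.
Qed.

Lemma fLT_inv_support :
  (2 < q)%N -> forall j, ~~ (q.-1 %| j)%N -> fLT_inv a phi j = 0.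
Proof.
move=> q_gt2 j j_ndvd; rewrite /fLT_inv LT_endo_support ?mulr0 //.
apply: contra j_ndvd => /eqP j_mod.
have : (j.+1 == 1 %[mod q.-1])%N by rewrite j_mod modn_small //; lia.
by rewrite eqn_mod_dvd // subn1.
Qed.

Lemma fLT_inv0 : a \is a GRing.unit -> fLT_inv a phi 0 = 1.
Proof. by case: phiE => _ phi1 _ a_unit; rewrite /fLT_inv phi1 mulVr. Qed.

Lemma LT_defect01_small : p%:R != 0 :> R -> (1 < q)%N ->
  forall k, (0 < k < q ^ 2)%N -> p%:R * LT_defect k 0 + LT_defect k 1 = 0.
Proof.
move=> p_neq0 q_gt1 k /andP [k_gt0 k_lt]; case: phiE => phi0 _ _.
apply: LT_defect01 => // n /andP [n_gt1 _].
have k_lt_qn : (k < q ^ n)%N by apply: leq_trans k_lt _; rewrite leq_exp2l.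
by rewrite /LT_defect ps_pow_small // ltn_eqF // mulr0 subr0.
Qed.

End LubinTateEndomorphism.

Lemma coef_exp_low (R : nzRingType) (G : {poly R}) d i j :
  (forall l, (l < d)%N -> G`_l = 0) -> (j < i * d)%N -> (G ^+ i)`_j = 0.
Proof.
move=> G_low; elim: i j => [|i IH] j j_lt; first by rewrite mul0n in j_lt.
rewrite exprS coefM big1 // => -[l l_le] _ /=.
have [l_lt|l_ge] := ltnP l d; first by rewrite G_low ?mul0r.
by rewrite IH ?mulr0 //; rewrite mulSn in j_lt; lia.
Qed.

Lemma eqmod_coef_exp1D_pfactor (R : comNzRingType) p e (G : {poly R}) d j :
  prime p -> (0 < e)%N -> (forall l, (l < d)%N -> G`_l = 0) ->
  (j < 2 * p ^ e.-1 * d)%N ->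
  eqmod (p%:R ^+ 2) ((G + 1) ^+ (p ^ e))`_j
    ((j == 0)%:R + 'C(p ^ e, p ^ e.-1)%:R * (G ^+ (p ^ e.-1))`_j).
Proof.
move=> p_pr e_gt0 G_low j_lt; set N := (p ^ e.-1)%N.
have N_gt0 : (0 < N)%N by rewrite expn_gt0 prime_gt0.
have N_lt : (N < (p ^ e).+1)%N.
  by rewrite ltnS /N -{2}(prednK e_gt0) expnS leq_pmull ?prime_gt0.
rewrite exprD1n coef_sum (bigD1 ord0) // (bigD1 (Ordinal N_lt)) -?lt0n //=.
rewrite expr0 bin0 mulr1n coef1 coefMn mulr_natl.
apply: eqmodD; first exact: eqmod_refl.
rewrite -[X in eqmod _ _ X]addr0; apply: eqmodD; first exact: eqmod_refl.
apply: eqmod_sum0 => -[i i_le] /andP [i_neq0 i_neqN]; rewrite coefMn.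
have [j_lt_id|] := ltnP j (i * d).
  by rewrite (coef_exp_low G_low j_lt_id) mul0rn; exact: eqmod_refl.
move=> id_le; rewrite -natrX; apply: eqmod_mulrn_dvd; apply: pfactor2_dvd_bin => //.
have d_gt0 : (0 < d)%N by case: d {G_low id_le} j_lt => //; rewrite muln0.
by rewrite lt0n i_neq0 -(ltn_pmul2r d_gt0) (leq_ltn_trans id_le).
Qed.

Section LubinTateCongruences.
Variables (p f : nat) (R : idomainType) (a c : R) (phi : nat -> R).
Hypotheses (p_pr : prime p) (p_odd : odd p) (f_gt0 : (0 < f)%N).
Hypotheses (p_neq0 : p%:R != 0 :> R) (a_unit : a \is a GRing.unit).
Hypotheses (phiE : is_LT_endo p f a phi) (c_def : p%:R * c = 1 - a ^+ (p ^ f).-1).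

Local Notation q := (p ^ f)%N.
Local Notation Q := (p ^ f).-1.
Local Notation N := (p ^ f.-1)%N.
Local Notation h := (fLT_inv a phi).
(* a_LT(T) / (aT), truncated beyond every degree that matters below. *)
Local Notation H := (\poly_(j < q ^ 2) h j).
Local Notation G := (H - 1).

Let N_gt0 : (0 < N)%N. Proof. by rewrite expn_gt0 prime_gt0. Qed.
Let q_eq : q = (p * N)%N. Proof. by rewrite -expnS prednK. Qed.
Let p_gt2 : (2 < p)%N. Proof. by move: p_odd (prime_gt1 p_pr); case: (p) => [|[|[|]]]. Qed.
Let q_gt2 : (2 < q)%N. Proof. by rewrite q_eq; nia. Qed.
Let q_eqS : q = Q.+1. Proof. by rewrite prednK // ltnW // ltnW. Qed.
Let Q_gt0 : (0 < Q)%N. Proof. by case: q q_gt2 => [|[]]. Qed.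
Let twoQ_lt : (2 * Q < q ^ 2)%N. Proof. by rewrite q_eqS -mulnn mulSn mulnS; lia. Qed.
Let twoN_le_Q : (2 * N <= Q)%N. Proof. by rewrite -ltnS -q_eqS q_eq ltn_pmul2r. Qed.

Lemma coef_G j : (0 < j < q ^ 2)%N -> G`_j = h j.
Proof. by case/andP=> j_gt0 j_lt; rewrite coefB coef_poly coef1 j_lt gtn_eqF // subr0. Qed.

Lemma coef_G_low l : (l < Q)%N -> G`_l = 0.
Proof.
rewrite coefB coef_poly coef1; case: l => [|l] l_lt.
  by rewrite ifT ?(fLT_inv0 phiE a_unit) ?subrr // expn_gt0 (ltnW (ltnW q_gt2)).
have l_ltq : (l.+1 < q ^ 2)%N by rewrite q_eqS; nia.
rewrite l_ltq subr0 (fLT_inv_support phiE q_gt2) //; apply/negP => /(dvdn_leq (ltn0Sn l)); lia.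
Qed.

Lemma fLT_inv_rec m : (m < 2 * N)%N ->
  p%:R * h (Q * m.+1)%N = (m == 0%N)%:R - a ^+ Q * (H ^+ q)`_(Q * m).
Proof.
move=> m_lt; set k := (Q * m.+1).+1.
have k_lt : (k < q ^ 2)%N.
  have : (Q * m.+1 <= Q * Q)%N by rewrite leq_mul2l; lia.
  by rewrite /k q_eqS -mulnn mulSn mulnS; lia.
have phi_aXH j : (j <= k)%N -> (a *: ('X * H))`_j = phi j.
  case: j => [|j] j_le; first by case: phiE => phi0 _ _; rewrite coefZ coefXM mulr0.
  by rewrite coefZ coefXM coef_poly ifT ?mulVKr //; lia.
have := LT_defect01_small phiE p_neq0 (ltnW q_gt2) (_ : 0 < k < q ^ 2)%N.
rewrite k_lt /LT_defect expn0 expn1 ps_pow1 -(coef_exp_ps_pow _ phi_aXH) => /(_ isT).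
rewrite -phi_aXH // exprZn exprMn !coefZ coefXnM coefXM coef_poly ifT; last by lia.
have -> : (k < q)%N = false by rewrite /k q_eqS ltnS ltnNge leq_pmulr.
have -> : (k - q = Q * m)%N by rewrite /k q_eqS mulnS; lia.
have -> : (k == q) = (m == 0%N) by rewrite /k q_eqS eqSS -{2}(muln1 Q) eqn_pmul2l; lia.
rewrite /k eqSS muln_eq0 orbF gtn_eqF ?Q_gt0 //= mulr0 subr0 => E.
have a_expq : a ^+ q = a * a ^+ Q by rewrite -exprS -q_eqS.
rewrite a_expq in E; apply: (mulrI a_unit); apply/eqP.
by rewrite -subr_eq0 -[X in _ == X]E; apply/eqP; ring.
Qed.

Lemma eqmod_fLT_inv_coef_GN m : (m < 2 * N)%N ->
  eqmod p%:R (h (Q * m.+1)%N) (c * (m == 0%N)%:R - (G ^+ N)`_(Q * m)).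
Proof.
move=> m_lt; set g := (G ^+ N)`_(Q * m).
(* [fLT_inv_rec] determines [p h] from [H^q], so [H^q] is needed modulo p^2. *)
have HqE : eqmod (p%:R ^+ 2) (H ^+ q)`_(Q * m) ((m == 0%N)%:R + p%:R * g).
  have := eqmod_coef_exp1D_pfactor (j := (Q * m)%N) p_pr f_gt0 coef_G_low.
  rewrite subrK muln_eq0 gtn_eqF ?Q_gt0 // => /(_ _)/eqmod_trans; apply.
    by rewrite mulnC ltn_pmul2r ?Q_gt0.
  apply: eqmodD; first exact: eqmod_refl.
  by apply: eqmodM; [exact: eqmod_bin_pfactor_pred | exact: eqmod_refl].
have aQE : a ^+ Q = 1 - p%:R * c by rewrite c_def opprB addrC subrK.
apply: (@eqmod_mul2l _ p%:R) => //; rewrite -expr2 fLT_inv_rec // aQE.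
apply: (@eqmod_trans _ _ _ ((m == 0%N)%:R - (1 - p%:R * c) * ((m == 0%N)%:R + p%:R * g))).
  by apply: eqmodD; [exact: eqmod_refl | apply/eqmodN/eqmodM; [exact: eqmod_refl|]].
by exists (c * g); ring.
Qed.

Lemma eqmod_coef_GN m : (m < 2 * N)%N ->
  eqmod p%:R (G ^+ N)`_(Q * m) (h Q ^+ N * (m == N)%:R).
Proof.
move=> m_lt; set G2 := G - h Q *: 'X^Q.
(* G = h_Q T^Q + G2 with G2 = O(T^(2Q)), and raising to the power N = p^(f-1)
   is additive modulo p. *)
have G2_low l : (l < 2 * Q)%N -> G2`_l = 0.
  move=> l_lt; rewrite coefB coefZ coefXn.
  have [l_ltQ|l_gtQ|->] := ltngtP l Q; last by rewrite coef_G ?eqxx ?mulr1 ?subrr //; lia.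
    by rewrite coef_G_low // mulr0 subr0.
  have l_ndvd : ~~ (Q %| l)%N.
    apply/negP => /dvdnP [k l_eq]; move: l_gtQ l_lt.
    by rewrite l_eq -{1}(mul1n Q) !ltn_pmul2r //; lia.
  by rewrite coef_G ?(fLT_inv_support phiE q_gt2 l_ndvd) ?gtn_eqF ?mulr0 ?subr0 //; lia.
have := eqmod_coef (Q * m) (eqmod_exprD_pfactor p_pr (h Q *: 'X^Q) G2 f.-1).
rewrite addrC subrK exprZn coefD coefZ -exprM coefXn eqn_pmul2l ?Q_gt0 //.
by rewrite (coef_exp_low G2_low) ?addr0 // mulnA mulnC ltn_pmul2r //; lia.
Qed.

Lemma eqmod_fLT_inv_Q : eqmod p%:R (h Q) c.
Proof.
have GN0 : (G ^+ N)`_(Q * 0) = 0 by rewrite muln0 (coef_exp_low coef_G_low) // muln_gt0 N_gt0.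
by have := @eqmod_fLT_inv_coef_GN 0%N; rewrite GN0 muln1 mulr1 subr0; apply; lia.
Qed.

Lemma eqmod_fLT_inv m : (m < 2 * N)%N ->
  eqmod p%:R (h (Q * m.+1)%N) (c * (m == 0%N)%:R - c ^+ N * (m == N)%:R).
Proof.
move=> m_lt; apply: eqmod_trans (eqmod_fLT_inv_coef_GN m_lt) _.
apply/eqmodD/eqmodN; first exact: eqmod_refl.
apply: eqmod_trans (eqmod_coef_GN m_lt) _.
by apply: eqmodM; [exact: eqmodX eqmod_fLT_inv_Q | exact: eqmod_refl].
Qed.

End LubinTateCongruences.

Lemma LT_shape_of_eqmod (R : comNzRingType) p f (c : R) (g : nat -> R) :
  (1 < p ^ f)%N -> (0 < p)%N -> g 0%N = 1 ->
  (forall k, ~~ ((p ^ f).-1 %| k)%N -> g k = 0) ->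
  (forall m, (m < 2 * p ^ f.-1)%N -> eqmod p%:R (g ((p ^ f).-1 * m.+1)%N)
     (c * (m == 0%N)%:R - c ^+ (p ^ f.-1) * (m == p ^ f.-1)%N%:R)) ->
  LT_shape p f c g.
Proof.
move=> q_gt1 p_gt0 g0 g_supp g_congr k; rewrite /LT_shape /LT_expected.
set Q := (p ^ f).-1; set N := (p ^ f.-1)%N.
have Q_gt0 : (0 < Q)%N by rewrite /Q -ltnS prednK // ltnW.
have N_gt0 : (0 < N)%N by rewrite expn_gt0 p_gt0.
have [/dvdnP [j ->] | k_ndvd] := boolP (Q %| k)%N; last first.
  rewrite g_supp //.
  have /negbTE -> : k != 0%N by apply: contraNneq k_ndvd => ->.
  have /negbTE -> : k != Q by apply: contraNneq k_ndvd => ->.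
  have /negbTE -> : k != (Q * (N + 1))%N by apply: contraNneq k_ndvd => ->; exact: dvdn_mulr.
  by split=> *; exact: eqmod_refl.
split=> [k_lt|]; last by move=> _ /negbTE.
case: j k_lt => [|m] k_lt; first by rewrite mul0n g0; exact: eqmod_refl.
rewrite mulnC in k_lt *; have m_lt : (m < 2 * N)%N by move: k_lt; rewrite ltn_mul2l; lia.
apply: eqmod_trans (g_congr m m_lt) _; rewrite muln_eq0 (negbTE (lt0n_neq0 Q_gt0)) /=.
rewrite -[X in _ * _ == X]muln1 !eqn_pmul2l // eqSS addn1 eqSS -/N.
have [->|_] := eqVneq m 0%N.
  by rewrite eq_sym (negbTE (lt0n_neq0 N_gt0)) mulr1 mulr0 subr0; exact: eqmod_refl.
have [_|_] := eqVneq m N; first by rewrite mulr0 mulr1 sub0r; exact: eqmod_refl.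
by rewrite !mulr0 subr0; exact: eqmod_refl.
Qed.

Theorem lemma2p1 (p f : nat) (R : idomainType) :
  prime p -> odd p -> (0 < f)%N -> is_unramified_Zp_ext R p f ->
  (forall a : R, a ^+ (p ^ f).-1 = 1 ->
     forall phi : nat -> R, is_LT_endo p f a phi ->
     forall k : nat, congp p (fLT a phi k) (k == 0%N)%:R)
  /\
  (forall a : R, a \is a GRing.unit ->
     forall phi : nat -> R, is_LT_endo p f a phi ->
     forall c : R, p%:R * c = 1 - a ^+ (p ^ f).-1 ->
     LT_shape p f c (fLT_inv a phi)).
Proof.
move=> p_pr p_odd f_gt0 [p_neq0 _ _ _ _].
have p_gt2 : (2 < p)%N by move: p_odd (prime_gt1 p_pr); case: (p) => [|[|[|]]].
have q_gt2 : (2 < p ^ f)%N := leq_trans p_gt2 (leq_pexp2l (prime_gt0 p_pr) f_gt0).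
split=> [a aq1 phi phiE k | a a_unit phi phiE c c_def].
  have a_unit : a \is a GRing.unit.
    by rewrite -(unitrX_pos _ (_ : 0 < (p ^ f).-1)%N) ?aq1 ?unitr1 //; lia.
  rewrite /fLT (ps_inv_one (s := fLT_inv a phi)) => [|j]; first exact: eqmod_refl.
  by rewrite /fLT_inv (LT_endo_teichmuller phiE (ltnW q_gt2) aq1) mulKr.
apply: LT_shape_of_eqmod => //; first exact: ltnW.
- exact: prime_gt0.
- exact: fLT_inv0 phiE a_unit.
- exact: fLT_inv_support phiE q_gt2.
- by move=> m; apply: eqmod_fLT_inv.
Qed.
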